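(* Let $C$ be a field, let $W$ be a $C$-vector space of finite dimension $r=\dim W$, and let $n\geq 1$ and $\ell\leq r$ be positive integers. Suppose that for each $i=1,\dots,n$ we are given subspaces $W_{i,1},\dots,W_{i,\ell}$ of $W$ such that $W=W_{i,1}\oplus W_{i,2}\oplus\cdots\oplus W_{i,\ell}$ (direct sum). For a tuple $\mathbf j=(j_1,\dots,j_n)\in\{1,\dots,\ell\}^n$ put $W_{\mathbf j}:=W_{1,j_1}\cap W_{2,j_2}\cap\cdots\cap W_{n,j_n}$. Then there are at most $r$ distinct tuples $\mathbf j\in\{1,\dots,\ell\}^n$ such that $W_{\mathbf j}\neq\{0\}$.
   Context: In the paper $C$ is an algebraically closed subfield of $\mathbb C$; the lemma is a statement of linear algebra over $C$. *)

From mathcomp Require Import all_boot all_order all_algebra.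
Set Implicit Arguments.
Unset Strict Implicit.
Unset Printing Implicit Defensive.
Import GRing.Theory.
Local Open Scope ring_scope.

Definition Wtuple (C : fieldType) (W : vectType C) (n l : nat)
  (Ws : 'I_n -> 'I_l -> {vspace W}) (j : {ffun 'I_n -> 'I_l}) : {vspace W} :=
  (\bigcap_(i < n) Ws i (j i))%VS.

From mathcomp Require Import all_boot all_order all_algebra.
Set Implicit Arguments.
Unset Strict Implicit.
Unset Printing Implicit Defensive.
Import GRing.Theory.
Local Open Scope ring_scope.

(* The family of all W_j is independent: given vectors u_j in W_j summing to
   zero, grouping the terms according to the value of the i-th coordinate and
   using the directness of the i-th decomposition shows that each group sums
   to zero; repeating this for every coordinate isolates a single u_j.  An
   independent family of nonzero subspaces has at most dim W members. *)

Section DirectSums.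
Variables (C : fieldType) (W : vectType C).

Lemma directv_sum_fibers (J K : finType) (V : K -> {vspace W}) (g : J -> K)
    (P : pred J) (u : J -> W) :
  directv (\sum_k V k) -> (forall j, P j -> u j \in V (g j)) ->
  \sum_(j | P j) u j = 0 ->
  forall k, \sum_(j | P j && (g j == k)) u j = 0.
Proof.
move=> dxV Vu u0 k; rewrite (partition_big g xpredT) // in u0.
apply: (directv_sum_independent dxV _ _ u0) => // k' _.
by apply: rpred_sum => j /andP[Pj /eqP <-]; apply: Vu.
Qed.

Lemma card_nonzero_directv (I : finType) (V : I -> {vspace W}) :
  directv (\sum_(i | V i != 0%VS) V i) ->
  (#|[set i | V i != 0%VS]| <= \dim {:W})%N.
Proof.
move=> /directvP /= dxV.
apply: leq_trans (dimvS (subvf (\sum_(i | V i != 0%VS) V i))).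
rewrite dxV -sum1_card (eq_bigl (fun i => V i != 0%VS)) => [|i]; last first.
  by rewrite inE.
by apply: leq_sum => i; rewrite lt0n dimv_eq0.
Qed.

End DirectSums.

Section TupleIntersections.
Variables (C : fieldType) (W : vectType C) (n l : nat).
Variable Ws : 'I_n -> 'I_l -> {vspace W}.
Hypothesis dxWs : forall i, directv (\sum_(k < l) Ws i k).

Lemma Wtuple_sub j i : (Wtuple Ws j <= Ws i (j i))%VS.
Proof. exact: (bigcapv_inf (Us := fun i => Ws i (j i)) i isT (subvv _)). Qed.

Lemma sum_Wtuple_agree (P : pred {ffun 'I_n -> 'I_l}) u :
  (forall j, P j -> u j \in Wtuple Ws j) -> \sum_(j | P j) u j = 0 ->
  forall (s : seq 'I_n) (j0 : {ffun 'I_n -> 'I_l}),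
  \sum_(j | P j && all (fun i => j i == j0 i) s) u j = 0.
Proof.
move=> Wu u0; elim=> [|i s IHs] j0.
  by rewrite -[RHS]u0; apply: eq_bigl => j; rewrite andbT.
have Wu' j : P j && all (fun i => j i == j0 i) s -> u j \in Ws i (j i).
  by case/andP=> /Wu Wuj _; apply: subvP (Wtuple_sub j i) _ Wuj.
rewrite -[RHS](directv_sum_fibers (dxWs i) Wu' (IHs j0) (j0 i)).
by apply: eq_bigl => j /=; rewrite andbA andbAC.
Qed.

Lemma directv_Wtuple (P : pred {ffun 'I_n -> 'I_l}) :
  directv (\sum_(j | P j) Wtuple Ws j).
Proof.
apply/directv_sum_independent => u Wu u0 j0 Pj0.
rewrite -(sum_Wtuple_agree Wu u0 (enum 'I_n) j0) (big_pred1 j0) // => j /=.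
have -> : all (fun i => j i == j0 i) (enum 'I_n) = (j == j0).
  by apply/allP/eqP => [eqj | -> //]; apply/ffunP => i; apply/eqP/eqj/mem_enum.
by case: eqVneq => [-> | _]; rewrite ?Pj0 ?andbF.
Qed.

End TupleIntersections.

Theorem lemma1 (C : fieldType) (W : vectType C) (n l : nat)
  (Ws : 'I_n -> 'I_l -> {vspace W}) :
  (1 <= n)%N -> (1 <= l)%N -> (l <= \dim (fullv : {vspace W}))%N ->
  (forall i : 'I_n,
     (\sum_(k < l) Ws i k)%VS = fullv /\ directv (\sum_(k < l) Ws i k)) ->
  (#|[set j : {ffun 'I_n -> 'I_l} | Wtuple Ws j != 0%VS]|
     <= \dim (fullv : {vspace W}))%N.
Proof.
move=> _ _ _ decWs.
apply: card_nonzero_directv; apply: directv_Wtuple => i.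
by case: (decWs i).
Qed.
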